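(* Let $T$ be an automorphism of a Lebesgue space $(X,\Sigma,\mu)$ and let $m\ge1$ be an integer. Then for every $g\in\mathcal{G}_0$ we have $h_\mu(g,T^m)\le m\,h_\mu(g,T)$.
   Context: $\mathcal{G}_0$ is the set of concave functions $g:[0,1]\to\mathbb{R}$ with $g(0)=\lim_{x\to0^+}g(x)=0$. For a measure-preserving $S$ and a finite measurable partition $\mathcal{P}$, let $\mathcal{P}_n^S=\bigvee_{i=0}^{n-1}S^{-i}\mathcal{P}$, $H(g,\mathcal{P})=\sum_{A\in\mathcal{P}}g(\mu(A))$, and $h_\mu(g,S,\mathcal{P})=\limsup_{n\to\infty}\frac1nH(g,\mathcal{P}_n^S)$. Finally, $h_\mu(g,S)=\sup_{\mathcal{P}\text{ finite}}h_\mu(g,S,\mathcal{P})$. *)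

From Stdlib Require Import Reals Lra Lia List Classical ClassicalEpsilon.
Import ListNotations.
Open Scope R_scope.

Inductive Rbar : Type := Fin (r : R) | PInf | MInf.

Definition Rbar_le (x y : Rbar) : Prop :=
  match x, y with
  | MInf, _ => True
  | _, PInf => True
  | Fin a, Fin b => a <= b
  | _, _ => False
  end.

Definition Rbar_opp (x : Rbar) : Rbar :=
  match x with Fin r => Fin (- r) | PInf => MInf | MInf => PInf end.

(* m * x for a natural number m (0 * x := 0) *)
Definition Rbar_nmul (m : nat) (x : Rbar) : Rbar :=
  match m with
  | O => Fin 0
  | S _ => match x with Fin r => Fin (INR m * r) | PInf => PInf | MInf => MInf end
  end.

Definition Rsup (E : R -> Prop) : Rbar :=
  match excluded_middle_informative (exists x, E x) with
  | left ne =>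
      match excluded_middle_informative (bound E) with
      | left b => Fin (proj1_sig (completeness E b ne))
      | right _ => PInf
      end
  | right _ => MInf
  end.

Definition Rbar_sup (E : Rbar -> Prop) : Rbar :=
  match excluded_middle_informative (E PInf) with
  | left _ => PInf
  | right _ => Rsup (fun r => E (Fin r))
  end.

Definition Rbar_inf (E : Rbar -> Prop) : Rbar :=
  Rbar_opp (Rbar_sup (fun x => E (Rbar_opp x))).

Definition limsup (u : nat -> R) : Rbar :=
  Rbar_inf (fun v => exists N : nat, v = Rsup (fun r => exists n, (N <= n)%nat /\ r = u n)).

Definition set_compl {X : Type} (A : X -> Prop) : X -> Prop := fun x => ~ A x.
Definition big_union {X : Type} (A : nat -> X -> Prop) : X -> Prop :=
  fun x => exists n, A n x.
Definition preimage {X Y : Type} (f : X -> Y) (A : Y -> Prop) : X -> Prop :=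
  fun x => A (f x).

Definition sigma_algebra {X : Type} (S : (X -> Prop) -> Prop) : Prop :=
  S (fun _ => True) /\
  (forall A, S A -> S (set_compl A)) /\
  (forall A : nat -> X -> Prop, (forall n, S (A n)) -> S (big_union A)).

Definition prob_measure {X : Type} (S : (X -> Prop) -> Prop) (mu : (X -> Prop) -> R) : Prop :=
  mu (fun _ => True) = 1 /\
  (forall A, S A -> 0 <= mu A) /\
  (forall A : nat -> X -> Prop,
      (forall n, S (A n)) ->
      (forall i j x, i <> j -> A i x -> A j x -> False) ->
      infinite_sum (fun n => mu (A n)) (mu (big_union A))).

Definition complete_measure {X : Type} (S : (X -> Prop) -> Prop) (mu : (X -> Prop) -> R) : Prop :=
  forall A B, S B -> mu B = 0 -> (forall x, A x -> B x) -> S A.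

Definition borel (A : R -> Prop) : Prop :=
  forall S : (R -> Prop) -> Prop, sigma_algebra S ->
    (forall a b, S (fun x => a < x < b)) -> S A.

(* B is measurable for the completion of the Borel measure nu, with measure v *)
Definition completion_value (nu : (R -> Prop) -> R) (B : R -> Prop) (v : R) : Prop :=
  exists B1 B2, borel B1 /\ borel B2 /\
    (forall x, B1 x -> B x) /\ (forall x, B x -> B2 x) /\ nu B1 = v /\ nu B2 = v.

Definition iso_mod0_to_completed_borel {X : Type} (S : (X -> Prop) -> Prop)
    (mu : (X -> Prop) -> R) (nu : (R -> Prop) -> R) : Prop :=
  exists (N : X -> Prop) (N' : R -> Prop) (phi : X -> R) (psi : R -> X),
    S N /\ mu N = 0 /\ completion_value nu N' 0 /\
    (forall x, ~ N x -> ~ N' (phi x) /\ psi (phi x) = x) /\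
    (forall y, ~ N' y -> ~ N (psi y) /\ phi (psi y) = y) /\
    (forall B v, completion_value nu B v -> S (preimage phi B) /\ mu (preimage phi B) = v) /\
    (forall A, S A -> completion_value nu (preimage psi A) (mu A)).

(* Lebesgue space = standard probability space: a complete probability space
   isomorphic mod 0 to the completion of a Borel probability measure on R. *)
Definition lebesgue_space {X : Type} (S : (X -> Prop) -> Prop) (mu : (X -> Prop) -> R) : Prop :=
  sigma_algebra S /\ prob_measure S mu /\ complete_measure S mu /\
  exists nu, prob_measure borel nu /\ iso_mod0_to_completed_borel S mu nu.

Definition measure_preserving {X : Type} (S : (X -> Prop) -> Prop) (mu : (X -> Prop) -> R)
    (f : X -> X) : Prop :=
  forall A, S A -> S (preimage f A) /\ mu (preimage f A) = mu A.

Definition automorphism {X : Type} (S : (X -> Prop) -> Prop) (mu : (X -> Prop) -> R)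
    (T : X -> X) : Prop :=
  exists Tinv : X -> X,
    (forall x, Tinv (T x) = x) /\ (forall x, T (Tinv x) = x) /\
    measure_preserving S mu T /\ measure_preserving S mu Tinv.

Fixpoint iter_fun {X : Type} (n : nat) (f : X -> X) (x : X) : X :=
  match n with O => x | S k => f (iter_fun k f x) end.

Definition in_G0 (g : R -> R) : Prop :=
  (forall x y t, 0 <= x <= 1 -> 0 <= y <= 1 -> 0 <= t <= 1 ->
     t * g x + (1 - t) * g y <= g (t * x + (1 - t) * y)) /\
  g 0 = 0 /\
  (forall eps, eps > 0 -> exists delta, delta > 0 /\
     forall x, 0 < x < delta -> x <= 1 -> Rabs (g x) < eps).

Definition finite_partition {X : Type} (S : (X -> Prop) -> Prop) (P : list (X -> Prop)) : Prop :=
  Forall S P /\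
  (forall x, exists A, In A P /\ A x) /\
  (forall i j x, (i < j < length P)%nat ->
     nth i P (fun _ => False) x -> nth j P (fun _ => False) x -> False).

Definition join {X : Type} (P Q : list (X -> Prop)) : list (X -> Prop) :=
  flat_map (fun A => map (fun B => fun x => A x /\ B x) Q) P.

(* P_n^S = \/_{i=0}^{n-1} S^{-i} P  (P_0 = trivial partition) *)
Fixpoint iter_join {X : Type} (T : X -> X) (P : list (X -> Prop)) (n : nat) : list (X -> Prop) :=
  match n with
  | O => [fun _ => True]
  | S k => join (iter_join T P k) (map (preimage (iter_fun k T)) P)
  end.

Definition Hg {X : Type} (g : R -> R) (mu : (X -> Prop) -> R) (P : list (X -> Prop)) : R :=
  fold_right (fun A acc => g (mu A) + acc) 0 P.

Definition hg_part {X : Type} (g : R -> R) (mu : (X -> Prop) -> R) (T : X -> X)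
    (P : list (X -> Prop)) : Rbar :=
  limsup (fun n => Hg g mu (iter_join T P n) / INR n).

Definition hg {X : Type} (S : (X -> Prop) -> Prop) (g : R -> R) (mu : (X -> Prop) -> R)
    (T : X -> X) : Rbar :=
  Rbar_sup (fun v => exists P, finite_partition S P /\ v = hg_part g mu T P).

From Stdlib Require Import Reals List Lra Lia Classical ClassicalEpsilon
  FunctionalExtensionality PropExtensionality.
Import ListNotations.
Open Scope R_scope.

(* Fix a finite measurable partition P. Two facts drive the proof:
   - P_{mn}^T refines P_n^{T^m}: every block of the latter is an intersection
     of preimages T^{-mk} P with k < n, and these occur among the T^{-i} P,
     i < mn ([iter_join_refines_power]);
   - H(g, .) does not decrease under refinement, because a concave g with
     g 0 = 0 is subadditive on [0,1] ([G0_subadditive], [Hg_refine]).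
   Hence H(g, P_n^{T^m}) / n <= m * H(g, P_{mn}^T) / (mn), and comparing the
   limsups along the subsequence mn gives h(g, T^m, P) <= m h(g, T, P); taking
   the supremum over P concludes. *)


Lemma Rbar_le_trans x y z : Rbar_le x y -> Rbar_le y z -> Rbar_le x z.
Proof. destruct x, y, z; simpl; auto; try lra; tauto. Qed.

Lemma Rbar_opp_involutive x : Rbar_opp (Rbar_opp x) = x.
Proof. destruct x; simpl; auto; now rewrite Ropp_involutive. Qed.

Lemma Rbar_opp_le x y : Rbar_le x y -> Rbar_le (Rbar_opp y) (Rbar_opp x).
Proof. destruct x, y; simpl; auto; lra. Qed.

Lemma Rsup_ub E r : E r -> Rbar_le (Fin r) (Rsup E).
Proof.
  intro Er. unfold Rsup.
  destruct (excluded_middle_informative (exists x, E x)) as [ne|ne].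
  - destruct (excluded_middle_informative (bound E)) as [b|b]; simpl; auto.
    destruct (completeness E b ne) as [l l_lub]; simpl. now apply (proj1 l_lub).
  - exfalso; eauto.
Qed.

Lemma Rsup_lub E u : (forall r, E r -> Rbar_le (Fin r) u) -> Rbar_le (Rsup E) u.
Proof.
  intro u_ub. unfold Rsup.
  destruct (excluded_middle_informative (exists x, E x)) as [ne|ne]; [|now simpl].
  destruct ne as [r0 Er0] eqn:Ene.
  destruct (excluded_middle_informative (bound E)) as [b|b].
  - destruct (completeness E b _) as [l l_lub]; simpl.
    destruct u as [c| |]; simpl; auto.
    + apply (proj2 l_lub). exact u_ub.
    + exact (u_ub r0 Er0).
  - destruct u as [c| |]; simpl; auto.
    + apply b. exists c. exact u_ub.
    + exact (u_ub r0 Er0).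
Qed.

Lemma Rbar_sup_ub (E : Rbar -> Prop) x : E x -> Rbar_le x (Rbar_sup E).
Proof.
  intro Ex. unfold Rbar_sup.
  destruct (excluded_middle_informative (E PInf)) as [p|p].
  - destruct x; simpl; auto.
  - destruct x as [r| |]; simpl; auto.
    + now apply Rsup_ub.
    + contradiction.
Qed.

Lemma Rbar_sup_lub (E : Rbar -> Prop) u :
  (forall x, E x -> Rbar_le x u) -> Rbar_le (Rbar_sup E) u.
Proof.
  intro u_ub. unfold Rbar_sup.
  destruct (excluded_middle_informative (E PInf)); auto.
  apply Rsup_lub. intros r Er. now apply u_ub.
Qed.

Lemma Rbar_inf_lb (E : Rbar -> Prop) x : E x -> Rbar_le (Rbar_inf E) x.
Proof.
  intro Ex. unfold Rbar_inf.
  rewrite <- (Rbar_opp_involutive x). apply Rbar_opp_le, Rbar_sup_ub.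
  now rewrite Rbar_opp_involutive.
Qed.

Lemma Rbar_inf_glb (E : Rbar -> Prop) l :
  (forall x, E x -> Rbar_le l x) -> Rbar_le l (Rbar_inf E).
Proof.
  intro l_lb. unfold Rbar_inf.
  rewrite <- (Rbar_opp_involutive l). apply Rbar_opp_le, Rbar_sup_lub.
  intros y Ey. rewrite <- (Rbar_opp_involutive y). now apply Rbar_opp_le, l_lb.
Qed.

Definition Rbar_scal (c : R) (x : Rbar) : Rbar :=
  match x with Fin r => Fin (c * r) | PInf => PInf | MInf => MInf end.

Lemma Rbar_scal_le c x y : 0 < c -> Rbar_le x y -> Rbar_le (Rbar_scal c x) (Rbar_scal c y).
Proof. intros Hc; destruct x, y; simpl; auto. intros; apply Rmult_le_compat_l; lra. Qed.

Lemma Rbar_scal_inv_le c x y :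
  0 < c -> Rbar_le (Rbar_scal (/ c) x) y <-> Rbar_le x (Rbar_scal c y).
Proof.
  intros Hc; destruct x as [r| |], y as [s| |]; simpl; try tauto.
  assert (E : r = c * (/ c * r)) by (field; lra). rewrite E at 2.
  split; intro H; [apply Rmult_le_compat_l; lra|].
  apply Rmult_le_reg_l with c; lra.
Qed.

Lemma Rbar_nmul_scal m x : (1 <= m)%nat -> Rbar_nmul m x = Rbar_scal (INR m) x.
Proof. intros Hm; destruct m; [lia|]. destruct x; reflexivity. Qed.

Lemma limsup_le_subseq (a b : nat -> R) (phi : nat -> nat) (c : R) (N0 : nat) :
  0 < c -> (forall n, (n <= phi n)%nat) ->
  (forall n, (N0 <= n)%nat -> a n <= c * b (phi n)) ->
  Rbar_le (limsup a) (Rbar_scal c (limsup b)).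
Proof.
  intros Hc phi_ge a_le.
  apply Rbar_scal_inv_le; auto.
  apply Rbar_inf_glb. intros v [N ->].
  apply Rbar_scal_inv_le; auto.
  set (tail_a := Rsup (fun r => exists n, (N + N0 <= n)%nat /\ r = a n)).
  assert (limsup_a_le : Rbar_le (limsup a) tail_a)
    by (apply Rbar_inf_lb; now exists (N + N0)%nat).
  assert (tail_a_le : Rbar_le tail_a
            (Rbar_scal c (Rsup (fun r => exists n, (N <= n)%nat /\ r = b n)))).
  { apply Rsup_lub. intros r [n [Hn ->]].
    apply Rbar_le_trans with (Rbar_scal c (Fin (b (phi n)))).
    - simpl. apply a_le. lia.
    - apply Rbar_scal_le; auto. apply Rsup_ub. exists (phi n). split; auto.
      specialize (phi_ge n). lia. }
  exact (Rbar_le_trans _ _ _ limsup_a_le tail_a_le).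
Qed.

Lemma pred_ext {X : Type} (A B : X -> Prop) : (forall x, A x <-> B x) -> A = B.
Proof.
  intro AB. apply functional_extensionality. intro x.
  now apply propositional_extensionality.
Qed.

Section ProbabilitySpace.
Context {X : Type}.
Variables (S : (X -> Prop) -> Prop) (mu : (X -> Prop) -> R).
Hypothesis S_sigma : sigma_algebra S.
Hypothesis mu_prob : prob_measure S mu.

Lemma S_True : S (fun _ => True).
Proof. apply S_sigma. Qed.

Lemma S_compl A : S A -> S (fun x => ~ A x).
Proof. apply S_sigma. Qed.

Lemma S_False : S (fun _ => False).
Proof.
  replace (fun _ : X => False) with (fun x : X => ~ (fun _ : X => True) x)
    by (apply pred_ext; tauto).
  apply S_compl, S_True.
Qed.

Lemma S_union A B : S A -> S B -> S (fun x => A x \/ B x).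
Proof.
  intros SA SB.
  replace (fun x => A x \/ B x)
    with (big_union (fun n => match n with O => A | _ => B end)).
  - apply S_sigma. intros [|n]; auto.
  - apply pred_ext. intro x. unfold big_union. split.
    + intros [[|n] Hn]; auto.
    + intros [H|H]; [exists O|exists 1%nat]; auto.
Qed.

Lemma S_inter A B : S A -> S B -> S (fun x => A x /\ B x).
Proof.
  intros SA SB.
  replace (fun x => A x /\ B x) with (fun x => ~ (fun y => ~ A y \/ ~ B y) x).
  - apply S_compl, S_union; now apply S_compl.
  - apply pred_ext. intro x. destruct (classic (A x)), (classic (B x)); tauto.
Qed.

Lemma mu_nonneg A : S A -> 0 <= mu A.
Proof. apply mu_prob. Qed.

(* Countable additivity applied to the constant sequence of empty sets:
   [c = c + c + ...] forces [c = 0]. *)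
Lemma mu_empty : mu (fun _ => False) = 0.
Proof.
  pose proof (proj2 (proj2 mu_prob) (fun _ : nat => fun _ : X => False)
                (fun _ => S_False) (fun _ _ _ _ h _ => h)) as sum_c.
  replace (big_union (fun _ : nat => fun _ : X => False)) with (fun _ : X => False)
    in sum_c by (apply pred_ext; unfold big_union; firstorder).
  set (c := mu (fun _ => False)) in *.
  assert (c_ge0 : 0 <= c) by apply mu_nonneg, S_False.
  destruct (Rle_lt_or_eq_dec 0 c c_ge0) as [c_pos|]; auto.
  exfalso. destruct (sum_c c c_pos) as [N HN].
  specialize (HN (Datatypes.S N) ltac:(lia)). rewrite sum_cte in HN. unfold Rdist in HN.
  rewrite !S_INR in HN. pose proof (pos_INR N).
  rewrite Rabs_right in HN; nra.
Qed.

Lemma mu_add A B : S A -> S B -> (forall x, A x -> B x -> False) ->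
  mu (fun x => A x \/ B x) = mu A + mu B.
Proof.
  intros SA SB AB.
  set (F := fun n : nat => match n with O => A | 1%nat => B | _ => fun _ : X => False end).
  assert (sum_F : infinite_sum (fun n => mu (F n)) (mu (fun x => A x \/ B x))).
  { replace (fun x => A x \/ B x) with (big_union F).
    - apply (proj2 (proj2 mu_prob)).
      + intros [|[|n]]; simpl; auto. apply S_False.
      + intros [|[|i]] [|[|j]] x Hij Hi Hj; simpl in *; try lia; try contradiction; eauto.
    - apply pred_ext. intro x. unfold big_union, F. split.
      + intros [[|[|n]] Hn]; auto; contradiction.
      + intros [H|H]; [exists O|exists 1%nat]; auto. }
  apply (uniqueness_sum (fun n => mu (F n))); auto.
  intros eps Heps. exists 1%nat. intros n Hn.
  assert (partial : sum_f_R0 (fun n => mu (F n)) n = mu A + mu B).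
  { induction n as [|[|n] IH]; [lia | reflexivity |].
    simpl in *. rewrite IH by lia. unfold F. rewrite mu_empty. ring. }
  rewrite partial. unfold Rdist. now rewrite Rminus_diag, Rabs_R0.
Qed.

Lemma mu_le_1 A : S A -> mu A <= 1.
Proof.
  intros SA.
  assert (split_A : mu (fun x => A x \/ ~ A x) = mu A + mu (fun x => ~ A x))
    by (apply mu_add; auto using S_compl).
  replace (fun x => A x \/ ~ A x) with (fun _ : X => True) in split_A
    by (apply pred_ext; intro x; pose proof (classic (A x)); tauto).
  destruct mu_prob as [mu_T _]. rewrite mu_T in split_A.
  pose proof (mu_nonneg _ (S_compl A SA)). lra.
Qed.

End ProbabilitySpace.

(* A concave [g] on [0,1] with [g 0 = 0] is subadditive on [0,1]:
   [a] and [b] are convex combinations of [a + b] and [0]. *)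
Lemma G0_subadditive g a b : in_G0 g -> 0 <= a -> 0 <= b -> a + b <= 1 ->
  g (a + b) <= g a + g b.
Proof.
  intros [g_concave [g0 _]] Ha Hb Hab.
  destruct (Req_dec (a + b) 0) as [Z|Z].
  { replace a with 0 by lra. replace b with 0 by lra. rewrite Rplus_0_r, g0. lra. }
  set (t := a / (a + b)).
  assert (Ht : 0 <= t <= 1).
  { unfold t; split.
    - apply Rmult_le_pos; [lra | apply Rlt_le, Rinv_0_lt_compat; lra].
    - apply Rmult_le_reg_r with (a + b); [lra|]. field_simplify; lra. }
  pose proof (g_concave (a + b) 0 t ltac:(lra) ltac:(lra) Ht) as ga.
  pose proof (g_concave (a + b) 0 (1 - t) ltac:(lra) ltac:(lra) ltac:(lra)) as gb.
  replace (t * (a + b) + (1 - t) * 0) with a in ga by (unfold t; field; auto).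
  replace ((1 - t) * (a + b) + (1 - (1 - t)) * 0) with b in gb by (unfold t; field; auto).
  rewrite g0 in ga, gb. lra.
Qed.

(* Finite sums over lists. [Hg g mu L] is [lsum (fun A => g (mu A)) L]. *)
Definition lsum {T : Type} (f : T -> R) (L : list T) : R :=
  fold_right (fun a acc => f a + acc) 0 L.

Lemma lsum_le {T : Type} (f h : T -> R) L :
  (forall a, In a L -> f a <= h a) -> lsum f L <= lsum h L.
Proof.
  induction L as [|a L IH]; simpl; intros f_le; [lra|].
  pose proof (f_le a (or_introl eq_refl)).
  pose proof (IH (fun b Hb => f_le b (or_intror Hb))). lra.
Qed.

Lemma lsum_ext {T : Type} (f h : T -> R) L :
  (forall a, In a L -> f a = h a) -> lsum f L = lsum h L.
Proof.
  intro fh. apply Rle_antisym; apply lsum_le; intros a Ha; rewrite (fh a Ha); lra.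
Qed.

Lemma lsum_zero {T : Type} (f : T -> R) L : (forall a, In a L -> f a = 0) -> lsum f L = 0.
Proof.
  induction L as [|a L IH]; simpl; intros f0; [lra|].
  rewrite IH, f0 by auto. ring.
Qed.

Lemma lsum_plus {T : Type} (f h : T -> R) L :
  lsum (fun a => f a + h a) L = lsum f L + lsum h L.
Proof. induction L as [|a L IH]; simpl; [ring|]. rewrite IH. ring. Qed.

Lemma lsum_swap {T U : Type} (F : T -> U -> R) L M :
  lsum (fun a => lsum (fun b => F a b) M) L = lsum (fun b => lsum (fun a => F a b) L) M.
Proof.
  induction L as [|a L IH]; simpl.
  - symmetry; now apply lsum_zero.
  - rewrite IH, <- lsum_plus. reflexivity.
Qed.

Lemma lsum_map {T U : Type} (f : U -> R) (h : T -> U) L :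
  lsum f (map h L) = lsum (fun a => f (h a)) L.
Proof. induction L as [|a L IH]; simpl; auto. now rewrite IH. Qed.

Section Partitions.
Context {X : Type}.

Fixpoint union_list (L : list (X -> Prop)) : X -> Prop :=
  match L with [] => fun _ => False | A :: L => fun x => A x \/ union_list L x end.

Fixpoint disjoint (L : list (X -> Prop)) : Prop :=
  match L with
  | [] => True
  | A :: L => (forall B, In B L -> forall x, A x -> B x -> False) /\ disjoint L
  end.

Definition covers (L : list (X -> Prop)) : Prop := forall x, exists A, In A L /\ A x.

Definition refines (Q P : list (X -> Prop)) : Prop :=
  forall B, In B Q -> exists A, In A P /\ forall x, B x -> A x.

Definition is_partition (S : (X -> Prop) -> Prop) (L : list (X -> Prop)) : Prop :=
  Forall S L /\ disjoint L /\ covers L.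

Lemma union_list_In L x : union_list L x <-> exists B, In B L /\ B x.
Proof.
  induction L as [|A L IH]; simpl; [firstorder|].
  rewrite IH. split.
  - intros [H|[B [HB Bx]]]; eauto.
  - intros [B [[<-|HB] Bx]]; eauto.
Qed.

Definition restrict (A : X -> Prop) (L : list (X -> Prop)) : list (X -> Prop) :=
  map (fun B x => A x /\ B x) L.

Lemma disjoint_restrict A L : disjoint L -> disjoint (restrict A L).
Proof.
  induction L as [|B L IH]; simpl; auto. intros [B_disj L_disj]. split; auto.
  intros C HC. apply in_map_iff in HC. destruct HC as [B' [<- HB']].
  intros x [_ H1] [_ H2]. eapply B_disj; eauto.
Qed.

Lemma union_restrict A L : covers L -> union_list (restrict A L) = A.
Proof.
  intro L_cov. apply pred_ext. intro x. rewrite union_list_In. split.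
  - intros [C [HC Cx]]. apply in_map_iff in HC. destruct HC as [B [<- _]]. apply Cx.
  - intros Ax. destruct (L_cov x) as [B [HB Bx]].
    exists (fun x => A x /\ B x). split; auto. now apply (in_map (fun B x => A x /\ B x)).
Qed.

Section Entropy.
Variables (S : (X -> Prop) -> Prop) (mu : (X -> Prop) -> R) (g : R -> R).
Hypothesis S_sigma : sigma_algebra S.
Hypothesis mu_prob : prob_measure S mu.
Hypothesis g_G0 : in_G0 g.

Lemma Forall_restrict A L : S A -> Forall S L -> Forall S (restrict A L).
Proof.
  intros SA SL. apply Forall_forall. intros C HC. apply in_map_iff in HC.
  destruct HC as [B [<- HB]]. apply S_inter; auto. now apply (Forall_forall S L).
Qed.

Lemma Hg_union L : Forall S L -> disjoint L -> g (mu (union_list L)) <= Hg g mu L.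
Proof.
  induction 1 as [|A L SA SL IH]; simpl.
  - rewrite (mu_empty S mu); auto. destruct g_G0 as [_ [g0 _]]. lra.
  - intros [A_disj L_disj].
    assert (S_U : S (union_list L)).
    { clear IH A_disj L_disj. induction SL; simpl; [apply S_False | apply S_union]; auto. }
    assert (A_U : forall x, A x -> union_list L x -> False).
    { intros x Ax Ux. apply union_list_In in Ux. destruct Ux as [B [? ?]]. eapply A_disj; eauto. }
    assert (mu_AU : mu (fun x => A x \/ union_list L x) = mu A + mu (union_list L))
      by (apply (mu_add S mu); auto).
    assert (mu_AU_le_1 : mu A + mu (union_list L) <= 1)
      by (rewrite <- mu_AU; apply (mu_le_1 S); auto; apply S_union; auto).
    rewrite mu_AU.
    eapply Rle_trans; [apply G0_subadditive; eauto using mu_nonneg|].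
    specialize (IH L_disj). unfold Hg in *. lra.
Qed.

(* If [B] lies inside a block of the disjoint family [Q], then cutting [B] by
   the blocks of [Q] leaves [B] itself and empty sets, which [g] ignores. *)
Lemma lsum_cut_block Q B : disjoint Q -> (exists A0, In A0 Q /\ forall x, B x -> A0 x) ->
  lsum (fun A => g (mu (fun x => A x /\ B x))) Q = g (mu B).
Proof.
  destruct g_G0 as [_ [g0 _]].
  assert (g_mu_empty : g (mu (fun _ => False)) = 0) by now rewrite (mu_empty S mu).
  induction Q as [|A Q IH]; simpl; [intros _ [A0 [[] _]]|].
  intros [A_disj Q_disj] [A0 [HA0 B_A0]].
  destruct HA0 as [<-|HA0].
  - replace (fun x => A x /\ B x) with B by (apply pred_ext; firstorder).
    rewrite lsum_zero; [ring|].
    intros A' HA'. replace (fun x => A' x /\ B x) with (fun _ : X => False); auto.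
    apply pred_ext. intro x. split; [tauto|]. intros [? ?]. eapply A_disj; eauto.
  - replace (fun x => A x /\ B x) with (fun _ : X => False).
    + rewrite g_mu_empty, IH; eauto. ring.
    + apply pred_ext. intro x. split; [tauto|]. intros [? ?]. eapply A_disj; eauto.
Qed.

Lemma Hg_refine P Q : is_partition S P -> is_partition S Q -> refines Q P ->
  Hg g mu P <= Hg g mu Q.
Proof.
  intros [SP [P_disj _]] [SQ [Q_disj Q_cov]] Q_P.
  change (Hg g mu P) with (lsum (fun A => g (mu A)) P).
  change (Hg g mu Q) with (lsum (fun B => g (mu B)) Q).
  apply Rle_trans with (lsum (fun A => Hg g mu (restrict A Q)) P).
  - apply lsum_le. intros A HA.
    rewrite <- (union_restrict A Q) at 1 by auto.
    apply Hg_union.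
    + apply Forall_restrict; auto. now apply (Forall_forall S P).
    + now apply disjoint_restrict.
  - rewrite (lsum_ext _ (fun A => lsum (fun B => g (mu (fun x => A x /\ B x))) Q))
      by (intros A _; exact (lsum_map (fun C => g (mu C)) _ Q)).
    rewrite lsum_swap.
    apply Req_le, lsum_ext. intros B HB. apply lsum_cut_block; auto.
Qed.
End Entropy.
End Partitions.

Section Joins.
Context {X : Type}.
Implicit Types (P Q L : list (X -> Prop)) (f : X -> X) (S : (X -> Prop) -> Prop).

Lemma In_join C P Q :
  In C (join P Q) <-> exists A B, In A P /\ In B Q /\ C = (fun x => A x /\ B x).
Proof.
  unfold join. rewrite in_flat_map. split.
  - intros [A [HA HC]]. apply in_map_iff in HC. destruct HC as [B [<- HB]]. eauto.
  - intros [A [B [HA [HB ->]]]]. exists A. split; auto. apply in_map_iff. eauto.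
Qed.

Lemma disjoint_app L1 L2 : disjoint L1 -> disjoint L2 ->
  (forall A B, In A L1 -> In B L2 -> forall x, A x -> B x -> False) -> disjoint (L1 ++ L2).
Proof.
  induction L1 as [|A L1 IH]; simpl; auto.
  intros [A_disj L1_disj] L2_disj cross. split.
  - intros B HB x Ax Bx. apply in_app_or in HB. destruct HB as [HB|HB]; eauto.
  - apply IH; eauto.
Qed.

Lemma join_partition S P Q : sigma_algebra S ->
  is_partition S P -> is_partition S Q -> is_partition S (join P Q).
Proof.
  intros S_sigma [SP [P_disj P_cov]] [SQ [Q_disj Q_cov]]. split; [|split].
  - apply Forall_forall. intros C HC. apply In_join in HC.
    destruct HC as [A [B [HA [HB ->]]]].
    apply S_inter; auto; [apply (Forall_forall S P) | apply (Forall_forall S Q)]; auto.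
  - clear P_cov. induction P as [|A P IH]; simpl; auto.
    destruct P_disj as [A_disj P_disj]. inversion SP; subst.
    apply disjoint_app; auto.
    + now apply disjoint_restrict.
    + intros C D HC HD x Cx Dx. apply in_map_iff in HC. destruct HC as [B [<- _]].
      apply In_join in HD. destruct HD as [A' [B' [HA' [_ ->]]]].
      destruct Cx, Dx. eapply A_disj; eauto.
  - intros x. destruct (P_cov x) as [A [HA Ax]], (Q_cov x) as [B [HB Bx]].
    exists (fun x => A x /\ B x). split; auto. apply In_join. eauto 7.
Qed.

Definition measurable_map (S : (X -> Prop) -> Prop) (f : X -> X) : Prop :=
  forall A, S A -> S (preimage f A).

Lemma measurable_iter S f k : measurable_map S f -> measurable_map S (iter_fun k f).
Proof. intros f_meas. induction k as [|k IH]; intros A SA; simpl; auto. exact (IH _ (f_meas A SA)). Qed.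

Lemma preimage_partition S f P : measurable_map S f ->
  is_partition S P -> is_partition S (map (preimage f) P).
Proof.
  intros f_meas [SP [P_disj P_cov]]. split; [|split].
  - apply Forall_forall. intros C HC. apply in_map_iff in HC.
    destruct HC as [A [<- HA]]. apply f_meas. now apply (Forall_forall S P).
  - clear P_cov SP. induction P as [|A P IH]; simpl; auto.
    destruct P_disj as [A_disj P_disj]. split; auto.
    intros C HC. apply in_map_iff in HC. destruct HC as [B [<- HB]].
    unfold preimage. intros x Ax Bx. eapply A_disj; eauto.
  - intros x. destruct (P_cov (f x)) as [A [HA Ax]].
    exists (preimage f A). split; auto. now apply in_map.
Qed.

Lemma iter_join_partition S f P n : sigma_algebra S -> measurable_map S f ->
  is_partition S P -> is_partition S (iter_join f P n).
Proof.
  intros S_sigma f_meas P_part. induction n as [|n IH]; simpl.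
  - split; [|split].
    + repeat constructor. now apply S_True.
    + simpl; tauto.
    + intros x. exists (fun _ => True). simpl; auto.
  - apply join_partition; auto. apply preimage_partition; auto. now apply measurable_iter.
Qed.

Lemma refines_trans L1 L2 L3 : refines L1 L2 -> refines L2 L3 -> refines L1 L3.
Proof.
  intros H12 H23 B HB. destruct (H12 B HB) as [A [HA BA]]. destruct (H23 A HA) as [C [HC AC]]. eauto.
Qed.

Lemma refines_join_l P Q : refines (join P Q) P.
Proof. intros C HC. apply In_join in HC. destruct HC as [A [B [HA [HB ->]]]]. exists A. split; auto. tauto. Qed.

Lemma refines_join_r P Q : refines (join P Q) Q.
Proof. intros C HC. apply In_join in HC. destruct HC as [A [B [HA [HB ->]]]]. exists B. split; auto. tauto. Qed.

Lemma refines_join L P Q : refines L P -> refines L Q -> refines L (join P Q).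
Proof.
  intros LP LQ B HB. destruct (LP B HB) as [A [HA BA]], (LQ B HB) as [C [HC BC]].
  exists (fun x => A x /\ C x). split; auto. apply In_join; eauto 7.
Qed.

Lemma iter_join_mono f P k k' : (k <= k')%nat -> refines (iter_join f P k') (iter_join f P k).
Proof.
  induction 1 as [|k' _ IH].
  - intros B HB. eauto.
  - eapply refines_trans; [|exact IH]. apply refines_join_l.
Qed.

Lemma iter_fun_add f a b x : iter_fun (a + b) f x = iter_fun a f (iter_fun b f x).
Proof. induction a as [|a IH]; simpl; auto. now rewrite IH. Qed.

Lemma iter_fun_mul f m n : iter_fun n (iter_fun m f) = iter_fun (m * n) f.
Proof.
  apply functional_extensionality. intro x.
  induction n as [|n IH]; simpl.
  - now rewrite Nat.mul_0_r.
  - rewrite IH, <- iter_fun_add. f_equal. lia.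
Qed.

(* Key combinatorial fact: [P_{mn}^f] refines [P_n^{f^m}], since the preimages
   [f^{-mk} P], [k < n], are among the [f^{-i} P], [i < mn]. *)
Lemma iter_join_refines_power f P m n : (1 <= m)%nat ->
  refines (iter_join f P (m * n)) (iter_join (iter_fun m f) P n).
Proof.
  intros Hm. induction n as [|n IH].
  - rewrite Nat.mul_0_r. intros B HB. eauto.
  - simpl iter_join at 2. apply refines_join.
    + eapply refines_trans; [|exact IH]. apply iter_join_mono. lia.
    + rewrite iter_fun_mul.
      eapply refines_trans; [apply (iter_join_mono f P (Datatypes.S (m * n))); lia|].
      apply refines_join_r.
Qed.

Lemma finite_partition_is_partition S P : finite_partition S P -> is_partition S P.
Proof.
  intros [SP [P_cov P_disj]]. split; [|split]; auto. clear SP P_cov.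
  induction P as [|A P IH]; simpl; auto. split.
  - intros B HB x Ax Bx. destruct (In_nth P B (fun _ => False) HB) as [j [Hj Hn]].
    apply (P_disj O (Datatypes.S j) x); simpl; auto; [lia | now rewrite Hn].
  - apply IH. intros i j x Hij Hi Hj. apply (P_disj (Datatypes.S i) (Datatypes.S j) x); simpl; auto. lia.
Qed.

End Joins.

Lemma Hg_iterate_power_le {X : Type} (S : (X -> Prop) -> Prop) (mu : (X -> Prop) -> R)
    (g : R -> R) (f : X -> X) (P : list (X -> Prop)) (m n : nat) :
  sigma_algebra S -> prob_measure S mu -> in_G0 g -> measurable_map S f ->
  is_partition S P -> (1 <= m)%nat -> (1 <= n)%nat ->
  Hg g mu (iter_join (iter_fun m f) P n) / INR n
    <= INR m * (Hg g mu (iter_join f P (m * n)) / INR (m * n)).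
Proof.
  intros S_sigma mu_prob g_G0 f_meas P_part Hm Hn.
  assert (n_pos : 0 < INR n) by (apply lt_0_INR; lia).
  assert (m_pos : 0 < INR m) by (apply lt_0_INR; lia).
  rewrite mult_INR.
  replace (INR m * (Hg g mu (iter_join f P (m * n)) / (INR m * INR n)))
    with (Hg g mu (iter_join f P (m * n)) / INR n) by (field; lra).
  apply Rmult_le_compat_r; [now apply Rlt_le, Rinv_0_lt_compat|].
  apply (Hg_refine S mu g); auto.
  - apply iter_join_partition; auto. now apply measurable_iter.
  - now apply iter_join_partition.
  - now apply iter_join_refines_power.
Qed.

Theorem mainTheorem16 (X : Type) (S : (X -> Prop) -> Prop) (mu : (X -> Prop) -> R)
  (T : X -> X) (m : nat) :
  lebesgue_space S mu -> automorphism S mu T -> (1 <= m)%nat ->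
  forall g : R -> R, in_G0 g ->
  Rbar_le (hg S g mu (iter_fun m T)) (Rbar_nmul m (hg S g mu T)).
Proof.
  intros [S_sigma [mu_prob _]] [_ [_ [_ [T_preserving _]]]] Hm g g_G0.
  assert (T_meas : measurable_map S T) by (intros A SA; apply (T_preserving A SA)).
  assert (m_pos : 0 < INR m) by (apply lt_0_INR; lia).
  rewrite Rbar_nmul_scal by auto.
  apply Rbar_sup_lub. intros v [P [P_fin ->]].
  apply Rbar_le_trans with (Rbar_scal (INR m) (hg_part g mu T P)).
  - apply (limsup_le_subseq _ _ (fun n => m * n)%nat _ 1); auto.
    + intro n. nia.
    + intros n Hn. apply (Hg_iterate_power_le S); auto. now apply finite_partition_is_partition.
  - apply Rbar_scal_le; auto. apply Rbar_sup_ub. now exists P.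
Qed.
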